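(* Let $G=(G_1,\dots,G_N)$ be a finite normal-form game with strategy sets $\mathcal{A}_q$, fix a player $p$, a scalar $s_p>0$ and an arbitrary function $b_p:\mathcal{A}_{-p}\to\mathbb{R}$, and let $\hat G$ be the game with $\hat G_p(a)=s_pG_p(a)+b_p(a_{-p})$ and $\hat G_q=G_q$ for $q\ne p$. Suppose $G$ and $\hat G$ each have a unique maximum-entropy Nash equilibrium. Then the Nash-average ratings $r^{\mathrm{NA}}_p$ of $G$ and $\hat r^{\mathrm{NA}}_p$ of $\hat G$ induce the same ranking of player $p$'s strategies: for all $a_p,\tilde a_p\in\mathcal{A}_p$, $r^{\mathrm{NA}}_p(a_p)<r^{\mathrm{NA}}_p(\tilde a_p)$ iff $\hat r^{\mathrm{NA}}_p(a_p)<\hat r^{\mathrm{NA}}_p(\tilde a_p)$, and $r^{\mathrm{NA}}_p(a_p)=r^{\mathrm{NA}}_p(\tilde a_p)$ iff $\hat r^{\mathrm{NA}}_p(a_p)=\hat r^{\mathrm{NA}}_p(\tilde a_p)$.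
   Context: A Nash equilibrium is a profile of mixed strategies $(\sigma_1,\dots,\sigma_N)$ such that no player can increase its expected payoff by unilaterally deviating; the maximum-entropy Nash equilibrium $\sigma^{\mathrm{MENE}}$ is a Nash equilibrium maximizing the Shannon entropy of the product distribution $\otimes_q\sigma_q$. The Nash-average rating of player $p$'s strategy $a_p$ in game $G$ is $r^{\mathrm{NA}}_p(a_p)=\sum_{a_{-p}\in\mathcal{A}_{-p}}G_p(a_p,a_{-p})\prod_{q\ne p}\sigma^{\mathrm{MENE}}_q(a_q)$, computed with the maximum-entropy Nash equilibrium of that game. *)

From HB Require Import structures.
From mathcomp Require Import all_boot all_order all_algebra.
From mathcomp Require Import all_classical all_reals all_analysis.
Set Implicit Arguments. Unset Strict Implicit. Unset Printing Implicit Defensive.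
Import Order.TTheory GRing.Theory Num.Theory.
Local Open Scope ring_scope.

Definition profile (N : nat) (A : 'I_N -> finType) := {dffun forall q : 'I_N, A q}.

Definition game (R : realType) (N : nat) (A : 'I_N -> finType) :=
  'I_N -> profile A -> R.

Definition mixed_prof (R : realType) (N : nat) (A : 'I_N -> finType) :=
  forall q : 'I_N, A q -> R.

Definition is_mixed (R : realType) (T : finType) (t : T -> R) : Prop :=
  (forall x, 0 <= t x) /\ \sum_(x : T) t x = 1.

Definition is_mixed_prof (R : realType) N (A : 'I_N -> finType)
  (sigma : mixed_prof R A) : Prop := forall q, is_mixed (sigma q).

Definition prodprob (R : realType) N (A : 'I_N -> finType)
  (sigma : mixed_prof R A) (a : profile A) : R :=
  \prod_(q : 'I_N) sigma q (a q).

Definition dev_payoff (R : realType) N (A : 'I_N -> finType) (G : game R A)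
  (p : 'I_N) (sigma : mixed_prof R A) (tau : A p -> R) : R :=
  \sum_(a : profile A) G p a * (tau (a p) * \prod_(q : 'I_N | q != p) sigma q (a q)).

Definition payoff (R : realType) N (A : 'I_N -> finType) (G : game R A)
  (p : 'I_N) (sigma : mixed_prof R A) : R :=
  \sum_(a : profile A) G p a * prodprob sigma a.

Definition is_nash (R : realType) N (A : 'I_N -> finType) (G : game R A)
  (sigma : mixed_prof R A) : Prop :=
  is_mixed_prof sigma /\
  forall (p : 'I_N) (tau : A p -> R), is_mixed tau ->
    @dev_payoff R N A G p sigma tau <= @payoff R N A G p sigma.

Definition xlnx (R : realType) (x : R) : R := if x == 0 then 0 else x * ln x.

Definition entropy (R : realType) N (A : 'I_N -> finType)
  (sigma : mixed_prof R A) : R :=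
  - \sum_(a : profile A) xlnx (prodprob sigma a).

Definition is_MENE (R : realType) N (A : 'I_N -> finType) (G : game R A)
  (sigma : mixed_prof R A) : Prop :=
  is_nash G sigma /\
  forall sigma' : mixed_prof R A, is_nash G sigma' -> entropy sigma' <= entropy sigma.

Definition unique_MENE (R : realType) N (A : 'I_N -> finType) (G : game R A) : Prop :=
  (exists sigma, is_MENE G sigma) /\
  forall s1 s2 : mixed_prof R A, is_MENE G s1 -> is_MENE G s2 ->
    forall q x, s1 q x = s2 q x.

(* Nash-average rating of strategy ap of player p w.r.t. sigma:
   sum over a_{-p} (i.e. over profiles a with a p = ap) of
   G_p(ap, a_{-p}) * prod_{q <> p} sigma_q(a_q). *)
Definition na_rating (R : realType) N (A : 'I_N -> finType) (G : game R A)
  (sigma : mixed_prof R A) (p : 'I_N) (ap : A p) : R :=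
  \sum_(a : profile A | a p == ap) G p a * \prod_(q : 'I_N | q != p) sigma q (a q).

Definition indep_of (N : nat) (A : 'I_N -> finType) (p : 'I_N) (R : Type)
  (b : profile A -> R) : Prop :=
  forall a a' : profile A, (forall q, q != p -> a q = a' q) -> b a = b a'.

Definition affine_game (R : realType) N (A : 'I_N -> finType) (G : game R A)
  (p : 'I_N) (s : R) (b : profile A -> R) : game R A :=
  fun q a => if q == p then s * G p a + b a else G q a.

From HB Require Import structures.
From mathcomp Require Import all_boot all_order all_algebra.
From mathcomp Require Import all_classical all_reals all_analysis.
Set Implicit Arguments. Unset Strict Implicit. Unset Printing Implicit Defensive.
Import Order.TTheory GRing.Theory Num.Theory.
Local Open Scope ring_scope.

(* Since b_p depends only on a_{-p}, the Nash-average ratings of player p in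
   the transformed game are s_p times those of G plus a constant that does not
   depend on p's own strategy.  Every expected payoff of p against a fixed
   profile of the others is an average of these ratings, so p's deviation
   gains are just scaled by s_p > 0: G and hat G have the same Nash equilibria,
   hence the same maximum-entropy ones, and uniqueness forces both ratings to
   be computed with the same equilibrium.  The two ratings are then related by
   a strictly increasing affine map, which preserves order and equality. *)

Section Reindexing.

Variables (N : nat) (A : 'I_N -> finType) (p : 'I_N).

Definition set_strategy (a : profile A) (x : A p) : profile A :=
  [ffun q => @dfwith _ (fun q => A q) (fun q => a q) p x q].

Lemma set_strategy_at (a : profile A) x : set_strategy a x p = x.
Proof. by rewrite ffunE; apply: dfwith_in. Qed.

Lemma set_strategy_other (a : profile A) x q : q != p -> set_strategy a x q = a q.
Proof. by move=> qp; rewrite ffunE; apply: dfwith_out; rewrite eq_sym. Qed.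

Lemma set_strategy_id (a : profile A) : set_strategy a (a p) = a.
Proof.
apply/ffunP => q; have [->|qp] := eqVneq q p; first by rewrite set_strategy_at.
by rewrite set_strategy_other.
Qed.

Lemma set_strategyK (a : profile A) x y :
  set_strategy (set_strategy a x) y = set_strategy a y.
Proof.
apply/ffunP => q; have [->|qp] := eqVneq q p; first by rewrite !set_strategy_at.
by rewrite !set_strategy_other.
Qed.

Lemma sum_fiber_indep (V : nmodType) (f : profile A -> V) (x y : A p) :
  indep_of p f ->
  \sum_(a : profile A | a p == x) f a = \sum_(a : profile A | a p == y) f a.
Proof.
move=> f_indep.
rewrite (reindex_onto (fun a : profile A => set_strategy a x)
                      (fun a : profile A => set_strategy a y)) /=; last first.
  by move=> a /eqP <-; rewrite set_strategyK set_strategy_id.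
apply: eq_big => [a|a _]; last by apply: f_indep => q qp; rewrite set_strategy_other.
rewrite set_strategy_at eqxx set_strategyK.
apply/eqP/eqP => [<-|<-]; first by rewrite set_strategy_at.
by rewrite set_strategy_id.
Qed.

End Reindexing.

Lemma sum_weights_const (R : realType) (T : finType) (c w1 w2 : T -> R) :
  (forall x y, c x = c y) -> \sum_x w1 x = \sum_x w2 x ->
  \sum_x w1 x * c x = \sum_x w2 x * c x.
Proof.
move=> c_const w12; have [y _|T_empty] := pickP (@predT T); last by rewrite !big_pred0.
rewrite (eq_bigr (fun x => w1 x * c y)) => [|x _]; last by rewrite (c_const x y).
rewrite [RHS](eq_bigr (fun x => w2 x * c y)) => [|x _]; last by rewrite (c_const x y).
by rewrite -!big_distrl /= w12.
Qed.

Section NashAverage.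

Variables (R : realType) (N : nat) (A : 'I_N -> finType).
Implicit Types (H G : game R A) (sigma : mixed_prof R A).

Lemma payoff_dev_payoff H p sigma : payoff H p sigma = dev_payoff H sigma (sigma p).
Proof. by apply: eq_bigr => a _; rewrite /prodprob (bigD1 p). Qed.

Lemma dev_payoff_na_rating H p sigma (tau : A p -> R) :
  dev_payoff H sigma tau = \sum_(x : A p) tau x * na_rating H sigma x.
Proof.
rewrite /dev_payoff (partition_big (fun a : profile A => a p) predT) //=.
apply: eq_bigr => x _; rewrite big_distrr /=.
by apply: eq_bigr => a /eqP <-; rewrite mulrCA.
Qed.

Variables (G : game R A) (p : 'I_N) (s : R) (b : profile A -> R).

Definition bias_rating sigma (x : A p) : R :=
  \sum_(a : profile A | a p == x) b a * \prod_(q : 'I_N | q != p) sigma q (a q).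

Lemma bias_rating_const sigma x y :
  indep_of p b -> bias_rating sigma x = bias_rating sigma y.
Proof.
move=> b_indep; apply: sum_fiber_indep => a a' eq_others.
rewrite (b_indep a a' eq_others); congr (_ * _).
by apply: eq_bigr => q qp; rewrite eq_others.
Qed.

Lemma na_rating_affine sigma x :
  na_rating (affine_game G p s b) sigma x = s * na_rating G sigma x + bias_rating sigma x.
Proof.
rewrite /na_rating big_distrr -big_split /=.
by apply: eq_bigr => a _; rewrite /affine_game eqxx mulrDl mulrA.
Qed.

Lemma dev_payoff_affine sigma (tau : A p -> R) :
  dev_payoff (affine_game G p s b) sigma tau =
  s * dev_payoff G sigma tau + \sum_x tau x * bias_rating sigma x.
Proof.
rewrite !dev_payoff_na_rating big_distrr -big_split /=.
by apply: eq_bigr => x _; rewrite na_rating_affine mulrDr mulrCA.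
Qed.

Lemma dev_payoff_affine_other q sigma (tau : A q -> R) : q != p ->
  dev_payoff (affine_game G p s b) sigma tau = dev_payoff G sigma tau.
Proof. by move=> qp; apply: eq_bigr => a _; rewrite /affine_game (negbTE qp). Qed.

Lemma payoff_affine_other q sigma : q != p ->
  payoff (affine_game G p s b) q sigma = payoff G q sigma.
Proof. by move=> qp; apply: eq_bigr => a _; rewrite /affine_game (negbTE qp). Qed.

Hypotheses (s_gt0 : 0 < s) (b_indep : indep_of p b).

Lemma is_nash_affine sigma : is_nash (affine_game G p s b) sigma <-> is_nash G sigma.
Proof.
suff same_gain : is_mixed_prof sigma -> forall q (tau : A q -> R), is_mixed tau ->
    (dev_payoff (affine_game G p s b) sigma tau <= payoff (affine_game G p s b) q sigma)
    = (dev_payoff G sigma tau <= payoff G q sigma).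
  by split=> -[mixed nash]; split=> // q tau /[dup] tau_mixed /nash;
    rewrite same_gain.
move=> mixed q tau tau_mixed; have [qp|qp] := eqVneq q p; last first.
  by rewrite dev_payoff_affine_other // payoff_affine_other.
subst q.
rewrite !payoff_dev_payoff !dev_payoff_affine.
rewrite (@sum_weights_const _ _ _ tau (sigma p)); last by rewrite (mixed p).2 tau_mixed.2.
  by rewrite lerD2r ler_pM2l.
by move=> x y; apply: bias_rating_const.
Qed.

Lemma is_MENE_affine sigma : is_MENE (affine_game G p s b) sigma <-> is_MENE G sigma.
Proof.
by split=> -[nash max_entropy]; split=> [|s' /is_nash_affine /max_entropy //];
  rewrite ?is_nash_affine // -is_nash_affine.
Qed.

End NashAverage.

Theorem mainTheorem8 (R : realType) (N : nat) (A : 'I_N -> finType)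
  (G : game R A) (p : 'I_N) (s : R) (b : profile A -> R) :
  0 < s -> indep_of p b ->
  unique_MENE G -> unique_MENE (affine_game G p s b) ->
  forall sigma sigmah : mixed_prof R A,
  is_MENE G sigma -> is_MENE (affine_game G p s b) sigmah ->
  forall ap ap' : A p,
    (na_rating G sigma ap < na_rating G sigma ap' <->
     na_rating (affine_game G p s b) sigmah ap <
       na_rating (affine_game G p s b) sigmah ap') /\
    (na_rating G sigma ap = na_rating G sigma ap' <->
     na_rating (affine_game G p s b) sigmah ap =
       na_rating (affine_game G p s b) sigmah ap').
Proof.
move=> s_gt0 b_indep _ [_ uniq_hat] sigma sigmah mene mene_hat ap ap'.
have mene' : is_MENE (affine_game G p s b) sigma by rewrite is_MENE_affine.
have -> : sigmah = sigma.
  apply: functional_extensionality_dep => q; apply: funext => x.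
  exact: uniq_hat.
rewrite !na_rating_affine (bias_rating_const sigma ap ap' b_indep).
split; first by rewrite ltrD2r ltr_pM2l.
by split=> [->//|/addIr/mulfI]; apply; rewrite gt_eqF.
Qed.
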